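(* Let $S\in\mathcal{T}_2V$ and $\hat S\in\mathcal{T}_3V$ be symmetric tensors (invariant under all permutations of their arguments). Then $y_{t'}^{\ast}(S\otimes\hat S)=y_{t'}^{\ast}(\hat S\otimes S)$, and in coordinates with respect to any basis $$\big(y_{t'}^{\ast}(S\otimes\hat S)\big)_{ijkls}=\big(y_{t'}^{\ast}(\hat S\otimes S)\big)_{ijkls}=4\big\{S_{il}\hat S_{jks}-S_{jl}\hat S_{iks}+S_{jk}\hat S_{ils}-S_{ik}\hat S_{jls}\big\}.$$ Moreover, the vector space of all algebraic covariant derivative curvature tensors $\mathfrak R'\in\mathcal T_5V$ equals the set of all finite sums of tensors $y_{t'}^{\ast}(S\otimes\hat S)$ with $S\in\mathcal T_2V$, $\hat S\in\mathcal T_3V$ symmetric (equivalently, of tensors $y_{t'}^{\ast}(\hat S\otimes S)$).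
   Context: $\mathbb{K}=\mathbb{R}$ or $\mathbb{C}$; $V$ is a finite-dimensional $\mathbb{K}$-vector space, $\mathcal{T}_rV$ the space of $r$-times covariant tensors; coordinates $T_{i_1\dots i_r}=T(e_{i_1},\dots,e_{i_r})$ for a basis $(e_i)$. $(S\otimes\hat S)(v_1,\dots,v_5)=S(v_1,v_2)\hat S(v_3,v_4,v_5)$, $(\hat S\otimes S)(v_1,\dots,v_5)=\hat S(v_1,v_2,v_3)S(v_4,v_5)$. Permutations multiply by $(p\circ q)(i)=p(q(i))$. An element $a=\sum_{p}a(p)\,p\in\mathbb{K}[\mathcal{S}_r]$ acts on $T\in\mathcal{T}_rV$ by $(aT)(v_1,\dots,v_r)=\sum_p a(p)\,T(v_{p(1)},\dots,v_{p(r)})$, i.e. $(aT)_{i_1\dots i_r}=\sum_p a(p)T_{i_{p(1)}\dots i_{p(r)}}$; and $a^{\ast}:=\sum_p a(p)\,p^{-1}$. For a Young tableau $t$, $y_t=\sum_{p\in\mathcal H_t}\sum_{q\in\mathcal V_t}\mathrm{sign}(q)\,p\circ q$, with $\mathcal H_t$ ($\mathcal V_t$) the row- (column-) preserving permutations. $t'$ is the Young tableau with rows $(1,3,5)$ and $(2,4)$. An algebraic covariant derivative curvature tensor is a tensor $\mathfrak{R}'\in\mathcal{T}_5V$ with, for all $u,w,x,y,z\in V$: $\mathfrak R'(w,x,y,z,u)=-\mathfrak R'(w,x,z,y,u)=\mathfrak R'(y,z,w,x,u)$, $\mathfrak R'(w,x,y,z,u)+\mathfrak R'(w,y,z,x,u)+\mathfrak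 R'(w,z,x,y,u)=0$, and $\mathfrak R'(w,x,y,z,u)+\mathfrak R'(w,x,z,u,y)+\mathfrak R'(w,x,u,y,z)=0$. *)

From HB Require Import structures.
From mathcomp Require Import all_boot all_order all_algebra all_fingroup.
From mathcomp Require Import complex.
From mathcomp Require Import Rstruct.
From Stdlib Require Rdefinitions.

Set Implicit Arguments.
Unset Strict Implicit.
Unset Printing Implicit Defensive.

Import GRing.Theory.
Local Open Scope ring_scope.

Section Tensors.
Variables (K : fieldType) (V : vectType K).

Definition tensor (r : nat) := ('I_r -> V) -> K.

Definition multilinear (r : nat) (T : tensor r) : Prop :=
  forall (i : 'I_r) (v : 'I_r -> V) (a : K) (x y : V),
    T (fun j => if j == i then a *: x + y else v j)
    = a * T (fun j => if j == i then x else v j)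
      + T (fun j => if j == i then y else v j).

Definition symmetric (r : nat) (T : tensor r) : Prop :=
  forall (p : 'S_r) (v : 'I_r -> V), T (fun i => v (p i)) = T v.

Definition args2 (a b : V) : 'I_2 -> V := fun i => nth 0 [:: a; b] i.
Definition args3 (a b c : V) : 'I_3 -> V := fun i => nth 0 [:: a; b; c] i.
Definition args5 (a b c d e : V) : 'I_5 -> V :=
  fun i => nth 0 [:: a; b; c; d; e] i.

Definition tprod23 (S : tensor 2) (Sh : tensor 3) : tensor 5 :=
  fun v => S (fun i : 'I_2 => v (lshift 3 i)) * Sh (fun i : 'I_3 => v (rshift 2 i)).
Definition tprod32 (Sh : tensor 3) (S : tensor 2) : tensor 5 :=
  fun v => Sh (fun i : 'I_3 => v (lshift 2 i)) * S (fun i : 'I_2 => v (rshift 3 i)).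

End Tensors.

(* Young tableaux of 5 boxes, given by their rows (entries 1..5, as in the
   paper).  The columns are computed from the rows. *)
Definition tableau := seq (seq nat).
Definition tab_rows (t : tableau) : seq (seq nat) := t.
Definition tab_cols (t : tableau) : seq (seq nat) :=
  [seq [seq nth 0%N r c | r <- t & (c < size r)%N]
     | c <- iota 0 (size (head [::] t))].

(* permutations of {1..5} (here 'I_5, with box entry m <-> index m-1)
   mapping every block of blocks to itself *)
Definition preserves (blocks : seq (seq nat)) (p : 'S_5) : bool :=
  all (fun b => [forall i : 'I_5, (i.+1 \in b) ==> ((p i).+1 \in b)]) blocks.

Definition Hset (t : tableau) : {set 'S_5} := [set p | preserves (tab_rows t) p].
Definition Vset (t : tableau) : {set 'S_5} := [set q | preserves (tab_cols t) q].

Definition t' : tableau := [:: [:: 1; 3; 5]; [:: 2; 4]]%N.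

(* y_t = sum_{p in H_t} sum_{q in V_t} sign(q) p o q, and
   y_t^* = sum_{p,q} sign(q) (p o q)^{-1}, acting on T by
   (a T)(v_1..v_5) = sum_r a(r) T(v_{r(1)},...,v_{r(5)}).
   (p o q)^{-1}(i) = q^{-1}(p^{-1}(i)). *)
Definition ystar (K : fieldType) (V : vectType K) (t : tableau)
    (T : tensor V 5) : tensor V 5 :=
  fun v => \sum_(p in Hset t) \sum_(q in Vset t)
             (-1) ^+ odd_perm q * T (fun i => v ((q^-1)%g ((p^-1)%g i))).

Definition acdct (K : fieldType) (V : vectType K) (R : tensor V 5) : Prop :=
  multilinear R /\
  forall u w x y z : V,
    [/\ R (args5 w x y z u) = - R (args5 w x z y u),
        R (args5 w x y z u) = R (args5 y z w x u),
        R (args5 w x y z u) + R (args5 w y z x u) + R (args5 w z x y u) = 0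
      & R (args5 w x y z u) + R (args5 w x z u y) + R (args5 w x u y z) = 0].

Definition sym_tensor (K : fieldType) (V : vectType K) (r : nat) (T : tensor V r) :=
  multilinear T /\ symmetric T.

Definition all_sym (K : fieldType) (V : vectType K)
    (L : seq (tensor V 2 * tensor V 3)) : Prop :=
  List.Forall (fun P => sym_tensor P.1 /\ sym_tensor P.2) L.

Definition Thm1p9 (K : fieldType) : Prop :=
  forall V : vectType K,
  (forall (S : tensor V 2) (Sh : tensor V 3),
     sym_tensor S -> sym_tensor Sh ->
     ystar t' (tprod23 S Sh) = ystar t' (tprod32 Sh S) /\
     forall e : seq V, basis_of fullv e ->
     forall i j k l s : nat,
       (i < size e)%N -> (j < size e)%N -> (k < size e)%N ->
       (l < size e)%N -> (s < size e)%N ->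
       let E (m : nat) := e`_m in
       let S2 a b := S (args2 (E a) (E b)) in
       let S3 a b c := Sh (args3 (E a) (E b) (E c)) in
       ystar t' (tprod23 S Sh) (args5 (E i) (E j) (E k) (E l) (E s))
         = 4%:R * (S2 i l * S3 j k s - S2 j l * S3 i k s
                   + S2 j k * S3 i l s - S2 i k * S3 j l s) /\
       ystar t' (tprod32 Sh S) (args5 (E i) (E j) (E k) (E l) (E s))
         = 4%:R * (S2 i l * S3 j k s - S2 j l * S3 i k s
                   + S2 j k * S3 i l s - S2 i k * S3 j l s))
  /\
  (forall R : tensor V 5,
     (acdct R <->
       exists2 L : seq (tensor V 2 * tensor V 3),
         all_sym L &
         forall v, R v = \sum_(P <- L) ystar t' (tprod23 P.1 P.2) v) /\
     (acdct R <->
       exists2 L : seq (tensor V 2 * tensor V 3),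
         all_sym L &
         forall v, R v = \sum_(P <- L) ystar t' (tprod32 P.2 P.1) v)).

From Pilot Require Import Defs.
From mathcomp Require Import all_boot all_algebra all_fingroup complex Rstruct ring.
From Stdlib Require Rdefinitions.
From Stdlib Require Import FunctionalExtensionality.

Set Implicit Arguments.
Unset Strict Implicit.
Unset Printing Implicit Defensive.
Import GRing.Theory.
Local Open Scope ring_scope.

(* Write Y(F) ([young_comb]) for
     4{F(i,l;j,k,s) - F(j,l;i,k,s) + F(j,k;i,l,s) - F(i,k;j,l,s)},
   the right-hand side of the coordinate formula with a general 5-ary F in
   place of S (x) Sh.  The formula itself is a finite computation: H_{t'} and
   V_{t'} are enumerated as index sequences (12 row and 4 column permutations)
   and the 48 terms collapse by the symmetry of S and Sh; the computation for
   Sh (x) S gives the same result.  By the formula, each y_{t'}^*(S (x) Sh)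
   satisfies the defining identities, hence so do finite sums of them.
   Conversely, for an algebraic covariant derivative curvature tensor R and a
   basis (e_a), let S_ab be the symmetrization of e^a (x) e^b and Sh_ab that of
   R(e_a, ., e_b, ., .) over its three free slots.  By multilinearity,
   sum_ab Y(S_ab (x) Sh_ab) = Y(Q) where Q(p,q;r,s,t) symmetrizes
   R(p,r,q,s,t) + R(q,r,p,s,t) over r, s, t, and Y(Q) = -96 R: once all values
   of R are put in normal form modulo its symmetries and the first Bianchi
   identity, this is 24 times a sum of two second Bianchi identities. *)

(** * Young symmetrization as a sum over index sequences *)

Section PermSeq.
Variable n : nat.

Definition perm_seq (p : 'S_n) : seq nat := [seq val (p i) | i <- enum 'I_n].

Lemma size_perm_seq (p : 'S_n) : size (perm_seq p) = n.
Proof. by rewrite size_map size_enum_ord. Qed.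

Lemma nth_perm_seq (p : 'S_n) (i : 'I_n) : nth 0%N (perm_seq p) i = p i.
Proof.
by rewrite (nth_map i) ?size_enum_ord ?ltn_ord // nth_ord_enum.
Qed.

Lemma perm_seq_inj : injective perm_seq.
Proof.
move=> p q epq; apply/permP => i; apply: ord_inj.
by rewrite -!nth_perm_seq epq.
Qed.

Lemma perm_seq_iota (p : 'S_n) : perm_eq (perm_seq p) (iota 0 n).
Proof.
rewrite /perm_seq -val_enum_ord (map_comp val p) perm_map //.
apply: uniq_perm; rewrite ?enum_uniq ?(map_inj_uniq perm_inj) ?enum_uniq // => i.
by rewrite mem_enum; apply/mapP; exists (p^-1 i)%g; rewrite ?mem_enum ?permKV.
Qed.

Lemma perm_seqs_permutations :
  perm_eq [seq perm_seq p | p <- enum 'S_n] (permutations (iota 0 n)).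
Proof.
have uniq_seqs : uniq [seq perm_seq p | p <- enum 'S_n].
  by rewrite (map_inj_uniq perm_seq_inj) enum_uniq.
apply: uniq_perm; rewrite ?permutations_uniq //.
apply: (uniq_min_size uniq_seqs _ _).2 => [_ /mapP[p _ ->]|].
  by rewrite mem_permutations perm_seq_iota.
by rewrite size_map -cardE card_Sn size_permutations ?iota_uniq // size_iota.
Qed.

Lemma big_perm_seq (R : Type) (idx : R) (op : Monoid.com_law idx)
    (P : pred (seq nat)) (F : seq nat -> R) :
  \big[op/idx]_(p : 'S_n | P (perm_seq p)) F (perm_seq p)
  = \big[op/idx]_(s <- permutations (iota 0 n) | P s) F s.
Proof.
by rewrite -(perm_big _ perm_seqs_permutations) big_map big_enum_cond.
Qed.
End PermSeq.
Arguments perm_seq {n} p.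

(* Unlike [inord], [ord5] computes on numerals. *)
Definition ord5 (k : nat) : 'I_5 :=
  match k with
  | 0 => @Ordinal 5 0 isT | 1 => @Ordinal 5 1 isT | 2 => @Ordinal 5 2 isT
  | 3 => @Ordinal 5 3 isT | _ => @Ordinal 5 4 isT
  end.

Lemma ord5K (k : nat) : (k < 5)%N -> val (ord5 k) = k.
Proof. by case: k => [|[|[|[|[|k]]]]]. Qed.

Lemma ord5_val (i : 'I_5) : ord5 i = i.
Proof. by apply: val_inj; rewrite ord5K. Qed.

Definition blocks_kept (bl : seq (seq nat)) (s : seq nat) : bool :=
  all (fun b => all (fun j => ((nth 0%N s j).+1 \in b) ==> (j.+1 \in b)) (iota 0 5)) bl.

Lemma preservesV (bl : seq (seq nat)) (p : 'S_5) :
  preserves bl (p^-1)%g = blocks_kept bl (perm_seq p).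
Proof.
apply: eq_all => b; apply/forallP/allP => [kept j | kept i].
  rewrite mem_iota => lt_j5; rewrite -[X in nth _ _ X](ord5K lt_j5) nth_perm_seq.
  by have := kept (p (ord5 j)); rewrite permK ord5K.
by have := kept (p^-1 i)%g; rewrite mem_iota ltn_ord nth_perm_seq permKV; apply.
Qed.

Definition col_alt (K : zmodType) (G : seq nat -> K) : K :=
  G [:: 0; 1; 2; 3; 4]%N - G [:: 1; 0; 2; 3; 4]%N
  - G [:: 0; 1; 3; 2; 4]%N + G [:: 1; 0; 3; 2; 4]%N.

(* [s] runs over the row permutations of t' and [c] over its column
   permutations, both given by their sequences of values. *)
Definition young_sum (K : zmodType) (g : seq nat -> K) : K :=
  \sum_(s <- permutations (iota 0 5) | blocks_kept (tab_rows t') s)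
     col_alt (fun c => g [seq nth 0%N c k | k <- s]).

(* The column group V_{t'} of t' (columns {1,2}, {3,4}, {5}), acting on
   'I_5 = {0,..,4}. *)
Definition col_perms : seq 'S_5 :=
  [:: 1; tperm (ord5 0) (ord5 1); tperm (ord5 2) (ord5 3);
      tperm (ord5 0) (ord5 1) * tperm (ord5 2) (ord5 3)]%g.

Lemma perm_seq5E (p : 'S_5) : perm_seq p = [seq val (p (ord5 k)) | k <- iota 0 5].
Proof.
rewrite /perm_seq -val_enum_ord -map_comp.
by apply: eq_map => i /=; rewrite ord5_val.
Qed.

Lemma perm_seq_col_perms :
  map perm_seq col_perms =
  [:: [:: 0; 1; 2; 3; 4]; [:: 1; 0; 2; 3; 4]; [:: 0; 1; 3; 2; 4]; [:: 1; 0; 3; 2; 4]]%N.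
Proof. by rewrite /= !perm_seq5E /= !permM !perm1 /tperm !permE. Qed.

Lemma uniq_col_perms : uniq col_perms.
Proof. by rewrite -(map_inj_uniq (@perm_seq_inj 5)) perm_seq_col_perms. Qed.

Lemma col_perms_spec (q : 'S_5) : ((q^-1)%g \in Vset t') = (q \in col_perms).
Proof.
have cols : [seq s <- permutations (iota 0 5) | blocks_kept (tab_cols t') s]
            =i map perm_seq col_perms.
  by apply: perm_mem; rewrite perm_seq_col_perms.
rewrite inE preservesV -(mem_map (@perm_seq_inj 5)) -cols mem_filter.
by rewrite mem_permutations perm_seq_iota andbT.
Qed.

Lemma sum_col_perms (K : pzRingType) (G : seq nat -> K) :
  \sum_(q <- col_perms) (-1) ^+ odd_perm q * G (perm_seq q) = col_alt G.
Proof.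
rewrite !big_cons big_nil; move: perm_seq_col_perms => /= [-> -> -> ->].
by rewrite odd_permM odd_perm1 !odd_tperm /= !mulN1r !mul1r addr0 /col_alt !addrA.
Qed.

Lemma ystar_t'E (K : fieldType) (V : vectType K) (T : tensor V 5) (v : 'I_5 -> V) :
  ystar t' T v = young_sum (fun s => T (fun i => v (ord5 (nth 0%N s i)))).
Proof.
rewrite /ystar (reindex_inj invg_inj) /=.
transitivity (\sum_(p | blocks_kept (tab_rows t') (perm_seq p))
  \sum_(q <- col_perms) (-1) ^+ odd_perm q * T (fun i => v (q (p i)))).
  apply: eq_big => [p | p _]; first by rewrite inE preservesV.
  rewrite (reindex_inj invg_inj) big_uniq ?uniq_col_perms //=.
  apply: eq_big => [q | q _]; first exact: col_perms_spec.
  by rewrite odd_permV !invgK.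
rewrite /young_sum -big_perm_seq; apply: eq_bigr => p _.
rewrite -sum_col_perms; apply: eq_bigr => q _; congr (_ * T _).
apply: functional_extensionality => i.
by rewrite (nth_map 0%N) ?size_perm_seq // (nth_perm_seq p) (nth_perm_seq q) ord5_val.
Qed.

(** * The coordinate formula *)

Definition young_comb (A : Type) (K : pzRingType) (F : A -> A -> A -> A -> A -> K)
    (x0 x1 x2 x3 x4 : A) : K :=
  4%:R * (F x0 x3 x1 x2 x4 - F x1 x3 x0 x2 x4 + F x1 x2 x0 x3 x4 - F x0 x2 x1 x3 x4).

Section YoungComb.
Variables (A : Type) (K : comPzRingType).

Lemma eq_young_comb (F G : A -> A -> A -> A -> A -> K) x0 x1 x2 x3 x4 :
  (forall p q a b c, F p q a b c = G p q a b c) ->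
  young_comb F x0 x1 x2 x3 x4 = young_comb G x0 x1 x2 x3 x4.
Proof. by move=> FG; rewrite /young_comb !FG. Qed.

Lemma young_comb_sum (I : Type) (r : seq I) (F : I -> A -> A -> A -> A -> A -> K)
    x0 x1 x2 x3 x4 :
  \sum_(i <- r) young_comb (F i) x0 x1 x2 x3 x4
  = young_comb (fun p q a b c => \sum_(i <- r) F i p q a b c) x0 x1 x2 x3 x4.
Proof. by rewrite /young_comb -mulr_sumr sumrB big_split sumrB. Qed.

Lemma young_combZ (k : K) (F : A -> A -> A -> A -> A -> K) x0 x1 x2 x3 x4 :
  young_comb (fun p q a b c => k * F p q a b c) x0 x1 x2 x3 x4
  = k * young_comb F x0 x1 x2 x3 x4.
Proof. by rewrite /young_comb; ring. Qed.
End YoungComb.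

Definition sort2 (a b : nat) : nat * nat := if (b < a)%N then (b, a) else (a, b).

Section SymmetricYoungSum.
Variables (A : Type) (K : comPzRingType) (f2 : A -> A -> K) (f3 : A -> A -> A -> K).
Hypothesis f2C : forall x y, f2 x y = f2 y x.
Hypothesis f3C12 : forall x y z, f3 x y z = f3 y x z.
Hypothesis f3C23 : forall x y z, f3 x y z = f3 x z y.

(* Copies of f2 and f3 on which the sorting lemmas do not fire again. *)
Definition f2_at (w : nat -> A) (a b : nat) : K := f2 (w a) (w b).
Definition f3_at (w : nat -> A) (a b c : nat) : K := f3 (w a) (w b) (w c).

Lemma f2_sorted w a b : f2 (w a) (w b) = let: (a, b) := sort2 a b in f2_at w a b.
Proof. by rewrite /sort2 /f2_at; case: ifP. Qed.

Lemma f3_sorted w a b c :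
  f3 (w a) (w b) (w c) =
  let: (a, b) := sort2 a b in let: (b, c) := sort2 b c in
  let: (a, b) := sort2 a b in f3_at w a b c.
Proof.
rewrite /sort2 /f3_at; do 3 (case: ifP => _ /=);
  first [ done | by rewrite f3C12 | by rewrite f3C23 | by rewrite f3C12 f3C23
        | by rewrite f3C23 f3C12 | by rewrite f3C12 f3C23 f3C12 ].
Qed.

Definition sym_prod (p q a b c : A) : K := f2 p q * f3 a b c.

Lemma young_sum23 (w : nat -> A) :
  young_sum (fun s => let x k := w (nth 0%N s k) in
                      f2 (x 0%N) (x 1%N) * f3 (x 2%N) (x 3%N) (x 4%N))
  = young_comb sym_prod (w 0%N) (w 1%N) (w 2%N) (w 3%N) (w 4%N).
Proof.
rewrite /young_sum -big_filter /= !big_cons big_nil /col_alt /young_comb /sym_prod /=.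
by rewrite !f2_sorted !f3_sorted /=; ring.
Qed.

Lemma young_sum32 (w : nat -> A) :
  young_sum (fun s => let x k := w (nth 0%N s k) in
                      f3 (x 0%N) (x 1%N) (x 2%N) * f2 (x 3%N) (x 4%N))
  = young_comb sym_prod (w 0%N) (w 1%N) (w 2%N) (w 3%N) (w 4%N).
Proof.
rewrite /young_sum -big_filter /= !big_cons big_nil /col_alt /young_comb /sym_prod /=.
by rewrite !f2_sorted !f3_sorted /=; ring.
Qed.

Lemma young_comb_curvature (x0 x1 x2 x3 x4 : A) :
  let Y := young_comb sym_prod in
  [/\ Y x0 x1 x2 x3 x4 = - Y x0 x1 x3 x2 x4, Y x0 x1 x2 x3 x4 = Y x2 x3 x0 x1 x4,
      Y x0 x1 x2 x3 x4 + Y x0 x2 x3 x1 x4 + Y x0 x3 x1 x2 x4 = 0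
    & Y x0 x1 x2 x3 x4 + Y x0 x1 x3 x4 x2 + Y x0 x1 x4 x2 x3 = 0].
Proof.
pose x := nth x0 [:: x0; x1; x2; x3; x4].
rewrite -[x0]/(x 0%N) -[x1]/(x 1%N) -[x2]/(x 2%N) -[x3]/(x 3%N) -[x4]/(x 4%N).
by rewrite /young_comb /sym_prod !f2_sorted !f3_sorted /=; split; ring.
Qed.
End SymmetricYoungSum.

Section Tensors.
Variables (K : fieldType) (V : vectType K).

Lemma tprod23E (S : tensor V 2) (Sh : tensor V 3) (u : 'I_5 -> V) :
  tprod23 S Sh u = S (args2 (u (ord5 0)) (u (ord5 1)))
                   * Sh (args3 (u (ord5 2)) (u (ord5 3)) (u (ord5 4))).
Proof.
by congr (S _ * Sh _); apply: functional_extensionality => -[[|[|[|m]]] lt_m] //=;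
  congr u; apply: val_inj.
Qed.

Lemma tprod32E (Sh : tensor V 3) (S : tensor V 2) (u : 'I_5 -> V) :
  tprod32 Sh S u = Sh (args3 (u (ord5 0)) (u (ord5 1)) (u (ord5 2)))
                   * S (args2 (u (ord5 3)) (u (ord5 4))).
Proof.
by congr (Sh _ * S _); apply: functional_extensionality => -[[|[|[|m]]] lt_m] //=;
  congr u; apply: val_inj.
Qed.

Definition form2 (S : tensor V 2) (x y : V) : K := S (args2 x y).
Definition form3 (Sh : tensor V 3) (x y z : V) : K := Sh (args3 x y z).

Lemma form2C (S : tensor V 2) : Defs.symmetric S -> forall x y, form2 S x y = form2 S y x.
Proof.
move=> symS x y; rewrite /form2 -(symS (tperm ord0 ord_max)); congr S.
by apply: functional_extensionality => -[[|[|m]] lt_m]; rewrite /tperm permE.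
Qed.

Lemma form3C12 (Sh : tensor V 3) : Defs.symmetric Sh ->
  forall x y z, form3 Sh x y z = form3 Sh y x z.
Proof.
move=> symSh x y z; rewrite /form3.
rewrite -(symSh (tperm (@Ordinal 3 0 isT) (@Ordinal 3 1 isT))); congr Sh.
by apply: functional_extensionality => -[[|[|[|m]]] lt_m]; rewrite /tperm permE.
Qed.

Lemma form3C23 (Sh : tensor V 3) : Defs.symmetric Sh ->
  forall x y z, form3 Sh x y z = form3 Sh x z y.
Proof.
move=> symSh x y z; rewrite /form3.
rewrite -(symSh (tperm (@Ordinal 3 1 isT) (@Ordinal 3 2 isT))); congr Sh.
by apply: functional_extensionality => -[[|[|[|m]]] lt_m]; rewrite /tperm permE.
Qed.

Lemma ystar_tprod23 (S : tensor V 2) (Sh : tensor V 3) (v : 'I_5 -> V) :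
  Defs.symmetric S -> Defs.symmetric Sh ->
  ystar t' (tprod23 S Sh) v = young_comb (sym_prod (form2 S) (form3 Sh))
    (v (ord5 0)) (v (ord5 1)) (v (ord5 2)) (v (ord5 3)) (v (ord5 4)).
Proof.
move=> symS symSh.
rewrite ystar_t'E -(young_sum23 (form2C symS) (form3C12 symSh) (form3C23 symSh)
                                (fun k => v (ord5 k))).
by congr young_sum; apply: functional_extensionality => s; rewrite tprod23E.
Qed.

Lemma ystar_tprod32 (S : tensor V 2) (Sh : tensor V 3) (v : 'I_5 -> V) :
  Defs.symmetric S -> Defs.symmetric Sh ->
  ystar t' (tprod32 Sh S) v = young_comb (sym_prod (form2 S) (form3 Sh))
    (v (ord5 0)) (v (ord5 1)) (v (ord5 2)) (v (ord5 3)) (v (ord5 4)).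
Proof.
move=> symS symSh.
rewrite ystar_t'E -(young_sum32 (form2C symS) (form3C12 symSh) (form3C23 symSh)
                                (fun k => v (ord5 k))).
by congr young_sum; apply: functional_extensionality => s; rewrite tprod32E.
Qed.
End Tensors.

(** * Quasi-idempotence on curvature tensors *)

Definition sym3 (A : Type) (K : nmodType) (F : A -> A -> A -> K) (x y z : A) : K :=
  F x y z + F x z y + F y x z + F y z x + F z x y + F z y x.

Lemma eq_lincomb2 (K : pzRingType) (k a b c d : K) :
  c = 0 -> d = 0 -> a - b = k * (c + d) -> a = b.
Proof. by move=> -> ->; rewrite addr0 mulr0 => /eqP; rewrite subr_eq0 => /eqP. Qed.

Section CurvatureIdentities.
Variables (A : Type) (K : comPzRingType) (R5 : A -> A -> A -> A -> A -> K).
Hypothesis R5_skew34 : forall w x y z u, R5 w x y z u = - R5 w x z y u.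
Hypothesis R5_pair : forall w x y z u, R5 w x y z u = R5 y z w x u.
Hypothesis R5_bianchi1 :
  forall w x y z u, R5 w x y z u + R5 w y z x u + R5 w z x y u = 0.
Hypothesis R5_bianchi2 :
  forall w x y z u, R5 w x y z u + R5 w x z u y + R5 w x u y z = 0.

Lemma R5_skew12 w x y z u : R5 w x y z u = - R5 x w y z u.
Proof. by rewrite R5_pair R5_skew34 -R5_pair. Qed.

Lemma R5_cyclic w x y z u : R5 w z x y u = R5 w y x z u - R5 w x y z u.
Proof.
rewrite [R5 w y x z u]R5_skew34; apply/eqP; rewrite -subr_eq0.
by rewrite -(R5_bianchi1 w x y z u); apply/eqP; ring.
Qed.

(* Normal form of R5 modulo its symmetries in the first four arguments and
   the first Bianchi identity: within each of the first two pairs the smaller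
   index comes first, the pair with the smallest index comes first, and the
   arrangement (a,d,b,c) with a < b < c < d is eliminated.  R5_at is a copy
   of R5 on which R5_normalE does not fire again. *)
Definition R5_at (x : nat -> A) (i j k l m : nat) : K :=
  R5 (x i) (x j) (x k) (x l) (x m).

Definition R5_normal (x : nat -> A) (i j k l m : nat) : K :=
  let: (s1, (i, j)) := if (j < i)%N then (-1, (j, i)) else (1, (i, j)) in
  let: (s2, (k, l)) := if (l < k)%N then (-1, (l, k)) else (1, (k, l)) in
  let: (i, j, k, l) := if (k < i)%N then (k, l, i, j) else (i, j, k, l) in
  s1 * s2 * (if (l < j)%N then R5_at x i l k j m - R5_at x i k l j m
             else R5_at x i j k l m).

Lemma R5_normalE (x : nat -> A) i j k l m :
  R5 (x i) (x j) (x k) (x l) (x m) = R5_normal x i j k l m.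
Proof.
rewrite /R5_normal.
case: ifP => _ /=; [rewrite R5_skew12 |];
  (case: ifP => _ /=; [rewrite R5_skew34 |]);
  (case: ifP => _ /=; [rewrite R5_pair |]);
  (case: ifP => _ /=; [rewrite R5_cyclic |]); rewrite /R5_at; ring.
Qed.

Definition pair_sym3 (p q a b c : A) : K :=
  sym3 (fun y z t => R5 p y q z t + R5 q y p z t) a b c.

Lemma young_comb_pair_sym3 x0 x1 x2 x3 x4 :
  young_comb pair_sym3 x0 x1 x2 x3 x4 = - 96%:R * R5 x0 x1 x2 x3 x4.
Proof.
pose x := nth x0 [:: x0; x1; x2; x3; x4].
rewrite -[x0]/(x 0%N) -[x1]/(x 1%N) -[x2]/(x 2%N) -[x3]/(x 3%N) -[x4]/(x 4%N).
have := R5_bianchi2 (x 0%N) (x 1%N) (x 2%N) (x 3%N) (x 4%N).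
have := R5_bianchi2 (x 2%N) (x 3%N) (x 0%N) (x 1%N) (x 4%N).
rewrite /young_comb /pair_sym3 /sym3 !R5_normalE /R5_normal /= => b2 b1.
(* In normal form the difference is 24 times the sum of b1 and b2. *)
by apply: (eq_lincomb2 (k := 24%:R) b1 b2); ring.
Qed.
End CurvatureIdentities.

(** * The two inclusions *)

Section Multilinear.
Variables (K : fieldType) (V : vectType K).

Lemma multilinear_comp r (T : tensor V r) (f g : 'I_r -> 'I_r) :
  cancel f g -> multilinear T -> multilinear (fun v => T (fun k => v (f k))).
Proof.
move=> fK mT i v a x y /=.
have upd z : (fun k => if f k == i then z else v (f k))
             = (fun k => if k == g i then z else v (f k)).
  by apply: functional_extensionality => k; rewrite (canF_eq fK).
by rewrite !upd; exact: mT.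
Qed.

Lemma multilinear_ystar (T : tensor V 5) : multilinear T -> multilinear (ystar t' T).
Proof.
move=> mT i v a x y; rewrite /ystar mulr_sumr -big_split; apply: eq_bigr => p _.
rewrite mulr_sumr -big_split; apply: eq_bigr => q _.
have qpK : cancel (fun k => (q^-1)%g ((p^-1)%g k)) (fun k => p (q k)).
  by move=> k /=; rewrite !permKV.
by rewrite (multilinear_comp qpK mT i v a x y) mulrDr mulrCA.
Qed.

Lemma multilinear_tprod23 (S : tensor V 2) (Sh : tensor V 3) :
  multilinear S -> multilinear Sh -> multilinear (tprod23 S Sh).
Proof.
move=> mS mSh i v a x y; rewrite /tprod23.
case: (@splitP 2 3 i) => [j eq_ij | k eq_ik].
- have -> : i = lshift 3 j by apply: ord_inj.
  have upd_l z : (fun l : 'I_2 => if lshift 3 l == lshift 3 j then z else v (lshift 3 l))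
                 = (fun l => if l == j then z else v (lshift 3 l)).
    by apply: functional_extensionality => l; rewrite (inj_eq (@lshift_inj 2 3)).
  have upd_r z : (fun l : 'I_3 => if rshift 2 l == lshift 3 j then z else v (rshift 2 l))
                 = (fun l => v (rshift 2 l)).
    by apply: functional_extensionality => l; rewrite eq_sym eq_lrshift.
  by rewrite !upd_l !upd_r mS mulrDl mulrA.
- have -> : i = rshift 2 k by apply: ord_inj.
  have upd_l z : (fun l : 'I_2 => if lshift 3 l == rshift 2 k then z else v (lshift 3 l))
                 = (fun l => v (lshift 3 l)).
    by apply: functional_extensionality => l; rewrite eq_lrshift.
  have upd_r z : (fun l : 'I_3 => if rshift 2 l == rshift 2 k then z else v (rshift 2 l))
                 = (fun l => if l == k then z else v (rshift 2 l)).
    by apply: functional_extensionality => l; rewrite (inj_eq (@rshift_inj 2 3)).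
  by rewrite !upd_l !upd_r mSh mulrDr mulrCA.
Qed.
End Multilinear.

Section CurvatureTensors.
Variables (K : fieldType) (V : vectType K).

Lemma acdct_ystar_tprod23 (S : tensor V 2) (Sh : tensor V 3) :
  sym_tensor S -> sym_tensor Sh -> acdct (ystar t' (tprod23 S Sh)).
Proof.
move=> [mS symS] [mSh symSh]; split.
  exact/multilinear_ystar/multilinear_tprod23.
move=> u w x y z; rewrite !ystar_tprod23 //.
exact: (young_comb_curvature (form2C symS) (form3C12 symSh) (form3C23 symSh)).
Qed.

Lemma acdct0 : acdct (fun _ : 'I_5 -> V => 0 : K).
Proof.
split=> [i v a x y | *]; first by rewrite mulr0 addr0.
by split; rewrite ?oppr0 ?addr0.
Qed.

Lemma acdctD (R1 R2 : tensor V 5) :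
  acdct R1 -> acdct R2 -> acdct (fun v => R1 v + R2 v).
Proof.
move=> [mR1 idR1] [mR2 idR2]; split=> [i v a x y | u w x y z].
  by rewrite mR1 mR2 mulrDr addrACA.
have [a1 a2 a3 a4] := idR1 u w x y z; have [b1 b2 b3 b4] := idR2 u w x y z.
have sum3 (p q r p' q' r' : K) : p + p' + (q + q') + (r + r') = p + q + r + (p' + q' + r').
  by ring.
split; first by rewrite a1 b1 opprD.
- by rewrite a2 b2.
- by rewrite sum3 a3 b3 addr0.
- by rewrite sum3 a4 b4 addr0.
Qed.

Lemma acdct_ext (R1 R2 : tensor V 5) : (forall v, R1 v = R2 v) -> acdct R1 -> acdct R2.
Proof. by move=> /functional_extensionality ->. Qed.

Lemma acdct_sum_ystar (L : seq (tensor V 2 * tensor V 3)) :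
  all_sym L -> acdct (fun v => \sum_(P <- L) ystar t' (tprod23 P.1 P.2) v).
Proof.
elim: L => [_ | P L IHL /List.Forall_cons_iff [[symS symSh] symL]].
  by apply: acdct_ext acdct0 => v; rewrite big_nil.
apply: acdct_ext (acdctD (acdct_ystar_tprod23 symS symSh) (IHL symL)) => v.
by rewrite big_cons.
Qed.
End CurvatureTensors.

Section SymmetricTensors.
Variables (K : fieldType) (V : vectType K).

Definition linear_form (h : V -> K) : Prop :=
  forall a x y, h (a *: x + y) = a * h x + h y.

Lemma multilinear_set_nth r (T : tensor V r) (s : seq V) (k : nat) :
  multilinear T -> (k < r)%N ->
  linear_form (fun z => T (fun i => nth 0 (set_nth 0 s k z) i)).
Proof.
move=> mT lt_kr a x y.
have upd z : (fun i : 'I_r => nth 0 (set_nth 0 s k z) i)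
             = (fun i => if i == Ordinal lt_kr then z else nth 0 s i).
  by apply: functional_extensionality => i; rewrite nth_set_nth /= -val_eqE.
by rewrite !upd; exact: mT.
Qed.

Definition tensor2 (f : V -> V -> K) : tensor V 2 := fun w => f (w ord0) (w ord_max).
Definition tensor3 (f : V -> V -> V -> K) : tensor V 3 :=
  fun w => f (w (@Ordinal 3 0 isT)) (w (@Ordinal 3 1 isT)) (w (@Ordinal 3 2 isT)).

Lemma sym_tensor2 (f : V -> V -> K) :
  (forall y, linear_form (f^~ y)) -> (forall x y, f x y = f y x) -> sym_tensor (tensor2 f).
Proof.
move=> linf fC; split=> [[[|[|m]] lt_m] w a x y | p w] //=; rewrite /tensor2.
- exact: linf.
- by rewrite !(fC (w ord0)) linf.
have : val (p ord0) != val (p ord_max) by rewrite (inj_eq val_inj) (inj_eq perm_inj).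
case: (p ord0) => [[|[|m0]] lt0]; case: (p ord_max) => [[|[|m1]] lt1] //= _.
- by congr f; congr w; apply: val_inj.
- by rewrite fC; congr f; congr w; apply: val_inj.
Qed.

Lemma sym_tensor3 (f : V -> V -> V -> K) :
  (forall y z, linear_form (fun x => f x y z)) ->
  (forall x y z, f x y z = f y x z) -> (forall x y z, f x y z = f x z y) ->
  sym_tensor (tensor3 f).
Proof.
move=> linf fC12 fC23; split=> [[[|[|[|m]]] lt_m] w a x y | p w] //=; rewrite /tensor3.
- exact: linf.
- by rewrite !(fC12 (w _)) linf.
- by rewrite !(fC23 (w _) (w _)) !(fC12 (w _)) linf.
set i0 := @Ordinal 3 0 isT; set i1 := @Ordinal 3 1 isT; set i2 := @Ordinal 3 2 isT.
have ordE m (lt_m : (m < 3)%N) : Ordinal lt_m = nth i0 [:: i0; i1; i2] m.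
  by apply: val_inj; case: m lt_m => [|[|[|m]]].
have inj_p i j : i != j -> val (p i) != val (p j).
  by rewrite (inj_eq val_inj) (inj_eq perm_inj).
move: (inj_p i0 i1 isT) (inj_p i0 i2 isT) (inj_p i1 i2 isT).
case: (p i0) => [[|[|[|m0]]] lt0]; case: (p i1) => [[|[|[|m1]]] lt1];
  case: (p i2) => [[|[|[|m2]]] lt2] //= _ _ _; rewrite !ordE /=.
all: first [ done | by rewrite {1}fC12 | by rewrite {1}fC23
           | by rewrite {1}fC12 {1}fC23 | by rewrite {1}fC23 {1}fC12
           | by rewrite {1}fC12 {1}fC23 {1}fC12 ].
Qed.

Lemma sym3C12 (F : V -> V -> V -> K) x y z : sym3 F x y z = sym3 F y x z.
Proof. by rewrite /sym3; ring. Qed.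

Lemma sym3C23 (F : V -> V -> V -> K) x y z : sym3 F x y z = sym3 F x z y.
Proof. by rewrite /sym3; ring. Qed.

Lemma linear_sym3 (F : V -> V -> V -> K) :
  (forall y z, linear_form (fun x => F x y z)) ->
  (forall x z, linear_form (fun y => F x y z)) ->
  (forall x y, linear_form (F x y)) ->
  forall y z, linear_form (fun x => sym3 F x y z).
Proof. by move=> lin1 lin2 lin3 y z a x x'; rewrite /sym3 !lin1 !lin2 !lin3; ring. Qed.
End SymmetricTensors.

Lemma Forall_allpairs (A B C : Type) (P : C -> Prop) (f : A -> B -> C) s t :
  (forall a b, P (f a b)) -> List.Forall P [seq f a b | a <- s, b <- t].
Proof.
move=> Pf; elim: s => [|a s IHs] /=; first by constructor.
apply/List.Forall_app; split=> //.
by elim: {IHs} t => [|b t IHt] /=; constructor.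
Qed.

Section Decomposition.
Variables (K : fieldType) (V : vectType K) (R : tensor V 5).
Hypotheses (acdctR : acdct R) (nz96 : (96%:R : K) != 0).

Let e := vbasis (fullv : {vspace V}).
Let n := \dim (fullv : {vspace V}).
Let R5 (x0 x1 x2 x3 x4 : V) : K := R (args5 x0 x1 x2 x3 x4).

Lemma coord_expand (h : V -> K) x :
  linear_form h -> \sum_(i < n) coord e i x * h e`_i = h x.
Proof.
move=> linh; have h0 : h 0 = 0.
  by apply: (@addrI _ (h 0)); rewrite addr0 -{1}(mul1r (h 0)) -linh scale1r addr0.
rewrite {2}(coord_vbasis (memvf x)).
by elim/big_rec2: _ => [|i y1 y2 _ ->]; rewrite ?h0 ?linh.
Qed.

Lemma coord_expand2 (G : V -> V -> K) p q :
  (forall y, linear_form (G^~ y)) -> (forall x, linear_form (G x)) ->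
  \sum_(a < n) \sum_(b < n) coord e a p * coord e b q * G e`_a e`_b = G p q.
Proof.
move=> linG1 linG2; rewrite -(coord_expand p (linG1 q)); apply: eq_bigr => a _.
rewrite -(coord_expand q (linG2 e`_a)) mulr_sumr.
by apply: eq_bigr => b _; rewrite mulrA.
Qed.

Definition kappa : K := - (96%:R)^-1.

Definition S_coord (a b : 'I_n) : tensor V 2 :=
  tensor2 (fun x y => kappa * (coord e a x * coord e b y + coord e b x * coord e a y)).

Definition Sh_curv (a b : 'I_n) : tensor V 3 :=
  tensor3 (sym3 (fun x y z => R5 e`_a x e`_b y z)).

Definition curv_pairs : seq (tensor V 2 * tensor V 3) :=
  [seq (S_coord a b, Sh_curv a b) | a <- index_enum 'I_n, b <- index_enum 'I_n].

Let R5_linear (s : seq V) (k : nat) :=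
  multilinear_set_nth s (proj1 acdctR) (k := k).

Lemma sym_S_coord a b : sym_tensor (S_coord a b).
Proof.
apply: sym_tensor2 => [y c x x' | x y]; last by ring.
by rewrite !linearP /=; ring.
Qed.

Lemma sym_Sh_curv a b : sym_tensor (Sh_curv a b).
Proof.
apply: sym_tensor3; [apply: linear_sym3 | exact: sym3C12 | exact: sym3C23] => x y.
- exact: (R5_linear [:: e`_a; 0; e`_b; x; y] (isT : (1 < 5)%N)).
- exact: (R5_linear [:: e`_a; x; e`_b; 0; y] (isT : (3 < 5)%N)).
- exact: (R5_linear [:: e`_a; x; e`_b; y; 0] (isT : (4 < 5)%N)).
Qed.

Lemma all_sym_curv_pairs : all_sym curv_pairs.
Proof.
by apply: Forall_allpairs => a b; split; [exact: sym_S_coord | exact: sym_Sh_curv].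
Qed.

Let R5_lin0 x1 x2 x3 x4 : linear_form (fun x => R5 x x1 x2 x3 x4) :=
  R5_linear [:: 0; x1; x2; x3; x4] (isT : (0 < 5)%N).
Let R5_lin2 x0 x1 x3 x4 : linear_form (fun x => R5 x0 x1 x x3 x4) :=
  R5_linear [:: x0; x1; 0; x3; x4] (isT : (2 < 5)%N).

Lemma sum_curv_pairs (p q r s t : V) :
  \sum_(a < n) \sum_(b < n) sym_prod (form2 (S_coord a b)) (form3 (Sh_curv a b)) p q r s t
  = kappa * pair_sym3 R5 p q r s t.
Proof.
pose G x y := sym3 (fun y' z u => R5 x y' y z u) r s t.
have linG1 y : linear_form (G^~ y).
  by move=> c x x'; rewrite /G /sym3 !R5_lin0; ring.
have linG2 x : linear_form (G x).
  by move=> c y y'; rewrite /G /sym3 !R5_lin2; ring.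
transitivity (kappa * (G p q + G q p)); last by rewrite /pair_sym3 /G /sym3; ring.
rewrite -(coord_expand2 p q linG1 linG2) -(coord_expand2 q p linG1 linG2).
rewrite mulrDr !mulr_sumr -big_split; apply: eq_bigr => a _.
rewrite !mulr_sumr -big_split; apply: eq_bigr => b _.
by rewrite /sym_prod /form2 /form3 /S_coord /Sh_curv /tensor2 /tensor3 /= /G; ring.
Qed.

Lemma young_comb_pair_sym3_R x0 x1 x2 x3 x4 :
  young_comb (pair_sym3 R5) x0 x1 x2 x3 x4 = - 96%:R * R5 x0 x1 x2 x3 x4.
Proof.
have [_ curvR] := acdctR.
by apply: young_comb_pair_sym3 => w x y z u; case: (curvR u w x y z).
Qed.

Lemma curv_pairs_spec v : R v = \sum_(P <- curv_pairs) ystar t' (tprod23 P.1 P.2) v.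
Proof.
rewrite big_allpairs_dep /=.
under eq_bigr => a _ do under eq_bigr => b _ do
  rewrite (ystar_tprod23 _ (proj2 (sym_S_coord a b)) (proj2 (sym_Sh_curv a b))).
under eq_bigr => a _ do rewrite young_comb_sum.
rewrite young_comb_sum (eq_young_comb _ _ _ _ _ sum_curv_pairs) young_combZ.
rewrite young_comb_pair_sym3_R mulrA /kappa mulNr mulrN opprK mulVf // mul1r.
congr R; apply: functional_extensionality => -[[|[|[|[|[|m]]]]] lt_m] //=.
all: by congr v; apply: val_inj.
Qed.
End Decomposition.

Section MainTheorem.
Variables (K : fieldType) (V : vectType K).

Lemma ystar_tprod23_32 (S : tensor V 2) (Sh : tensor V 3) :
  Defs.symmetric S -> Defs.symmetric Sh ->
  ystar t' (tprod23 S Sh) = ystar t' (tprod32 Sh S).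
Proof.
move=> symS symSh; apply: functional_extensionality => v.
by rewrite ystar_tprod23 // ystar_tprod32.
Qed.

Lemma sum_ystar_tprod32 (L : seq (tensor V 2 * tensor V 3)) v : all_sym L ->
  \sum_(P <- L) ystar t' (tprod23 P.1 P.2) v = \sum_(P <- L) ystar t' (tprod32 P.2 P.1) v.
Proof.
elim: L => [_ | P L IHL /List.Forall_cons_iff [[[_ symS] [_ symSh]] symL]].
  by rewrite !big_nil.
by rewrite !big_cons ystar_tprod23_32 // IHL.
Qed.

Lemma acdct_sumP (R : tensor V 5) : (96%:R : K) != 0 ->
  acdct R <-> exists2 L : seq (tensor V 2 * tensor V 3), all_sym L &
    forall v, R v = \sum_(P <- L) ystar t' (tprod23 P.1 P.2) v.
Proof.
move=> nz96; split=> [acdctR | [L symL eqR]].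
  by exists (curv_pairs R); [exact: all_sym_curv_pairs | exact: curv_pairs_spec].
exact: acdct_ext (fun v => esym (eqR v)) (acdct_sum_ystar symL).
Qed.
End MainTheorem.

Lemma Thm1p9_char (K : fieldType) : (6%:R : K) != 0 -> Thm1p9 K.
Proof.
move=> nz6 V; have nz96 : (96%:R : K) != 0.
  have nz2 : (2%:R : K) != 0.
    by apply: contraNneq nz6 => two0; rewrite -[6%N]/(2 * 3)%N natrM two0 mul0r.
  by rewrite -[96%N]/(6 * 2 ^ 4)%N natrM natrX mulf_neq0 ?expf_neq0.
split=> [S Sh [_ symS] [_ symSh] | R].
  split=> [|e _ i j k l s _ _ _ _ _]; first exact: ystar_tprod23_32.
  by rewrite /= ystar_tprod23 // ystar_tprod32.
split; first exact: acdct_sumP.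
rewrite acdct_sumP //; split=> -[L symL eqR]; exists L => // v; rewrite eqR.
  exact: sum_ystar_tprod32.
by rewrite sum_ystar_tprod32.
Qed.

Theorem theorem1p9 : Thm1p9 Rdefinitions.R /\ Thm1p9 (Rdefinitions.R)[i].
Proof. by split; apply: Thm1p9_char; rewrite Num.Theory.pnatr_eq0. Qed.
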